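(* Consider the finite-horizon sensor scheduling problem (Problem 1) described in the context, with horizon $K\in\mathbb{Z}_+$ and trade-off parameter $\gamma>0$. Define $Q_K(\mathcal{M}_K)=\Tr(\Sigma_K)$ and, for $k=K-1,\ldots,0$, the $Q$-functions $$Q_k(\mathcal{M}_k)=\Tr(\Sigma_k)+\sum_{m=1}^M\gamma\Tr(\delta_{m,k}\mathbf{C}_m\mathbf{C}_m^T)+\mathbb{E}\Big[\min_{\pi_{k+1}}Q_{k+1}(\mathcal{M}_{k+1})\,\Big|\,\mathcal{M}_k\Big],$$ where $\mathcal{M}_k=\{\Sigma_k,\mathbf{H}_k,\pi_k\}$, $\Sigma_{k+1}=f(\mathcal{M}_k)+\mathbf{W}$, and the conditional expectation is over the fresh channel realization $\mathbf{H}_{k+1}$ (independent of $\mathcal{M}_k$). Then Problem 1 is optimally solved backward in time by these DP recursions (i.e., choosing $\pi_k$ to minimize $Q_k(\mathcal{M}_k)$ at each $k$), and for every $k=K-1,\ldots,0$, $$Q_k(\mathcal{M}_k)=\Tr(\Sigma_k)+\sum_{m=1}^M\gamma\Tr(\delta_{m,k}\mathbf{C}_m\mathbf{C}_m^T)+\Tr(f(\mathcal{M}_k))+(K-k)\Tr(\mathbf{W})+\Delta_k(\mathcal{M}_k)\mathbf{1}_{k\le K-2},$$ where $\Delta_{K-1}(\mathcal{M}_{K-1})=0$ and, for $k\le K-2$, $$\Delta_k(\mathcal{M}_k)=\mathbb{E}\Big[\min_{\pi_{k+1}}\Big(\sum_{m=1}^M\gamma\Tr(\delta_{m,k+1}\mathbf{C}_m\mathbf{C}_m^T)+\Tr\big(f(f(\mathcal{M}_k)+\mathbf{W},\pi_{k+1},\mathbf{H}_{k+1})\big)+\Delta_{k+1}\big(f(\mathcal{M}_k)+\mathbf{W},\mathbf{H}_{k+1},\pi_{k+1}\big)\Big)\,\Big|\,\mathcal{M}_k\Big].$$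 Moreover, the optimal solution $\pi_k^*=\{\delta^*_{1,k},\ldots,\delta^*_{M,k}\}$ minimizing $Q_k$ is given by $\delta^*_{m,k}=1$ when $$\Tr\big(f(\Sigma_k,\{\delta^*_{-m},\delta_{m,k}=0\},\mathbf{H}_k)\big)+\Delta_k\big(\Sigma_k,\mathbf{H}_k,\{\delta^*_{-m},\delta_{m,k}=0\}\big)-\Tr\big(f(\Sigma_k,\{\delta^*_{-m},\delta_{m,k}=1\},\mathbf{H}_k)\big)-\Delta_k\big(\Sigma_k,\mathbf{H}_k,\{\delta^*_{-m},\delta_{m,k}=1\}\big)\ge\Tr(\gamma\mathbf{C}_m\mathbf{C}_m^T),$$ where $\delta^*_{-m}=\{\delta^*_{i,k}:1\le i\le M,\ i\ne m\}$.
   Context: Plant: $\mathbf{x}_{k+1}=\mathbf{A}\mathbf{x}_k+\mathbf{w}_k$ with $\mathbf{x}_k\in\mathbb{R}^{S}$, known $\mathbf{A}\in\mathbb{R}^{S\times S}$, and i.i.d. $\mathbf{w}_k\sim\mathcal{N}(\mathbf{0},\mathbf{W})$ with $\mathbf{W}$ positive definite. There are $M$ sensors; sensor $m$ has $N_t$ transmit antennas and observation matrix $\mathbf{C}_m\in\mathbb{R}^{N_t\times S}$, measuring $\mathbf{z}_{m,k}=\mathbf{C}_m\mathbf{x}_k$. The receiver has $N_r$ antennas and receives $\mathbf{y}_k=\sum_{m=1}^M\delta_{m,k}\mathbf{H}_{m,k}\mathbf{z}_{m,k}+\mathbf{v}_k$, with $\mathbf{v}_k\sim\mathcal{N}(\mathbf{0},\mathbf{I}_{N_r})$,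 scheduling variables $\delta_{m,k}\in\{0,1\}$, and channel matrices $\mathbf{H}_{m,k}\in\mathbb{R}^{N_r\times N_t}$ whose entries are i.i.d. $\mathcal{N}(0,1)$, independent across sensors and time slots. Write $\mathbf{H}_k=\{\mathbf{H}_{1,k},\ldots,\mathbf{H}_{M,k}\}$, $\pi_k=\{\delta_{1,k},\ldots,\delta_{M,k}\}$, $\bar{\mathbf{H}}_{m,k}=\mathbf{H}_{m,k}\mathbf{C}_m$. For a positive definite $\Sigma$, define $$f(\Sigma,\pi_k,\mathbf{H}_k)=\mathbf{A}\Big(\Sigma^{-1}+\big(\textstyle\sum_{m=1}^M\delta_{m,k}\bar{\mathbf{H}}_{m,k}\big)^T\big(\sum_{m=1}^M\delta_{m,k}\bar{\mathbf{H}}_{m,k}\big)\Big)^{-1}\mathbf{A}^T,$$ and write $f(\mathcal{M}_k)$ for $f(\Sigma_k,\pi_k,\mathbf{H}_k)$ when $\mathcal{M}_k=\{\Sigma_k,\mathbf{H}_k,\pi_k\}$. The Kalman-filter prior error covariance evolves as $\Sigma_{k+1}=f(\Sigma_k,\pi_k,\mathbf{H}_k)+\mathbf{W}$, starting from a given positive definite $\Sigma_0$. Problem 1: over scheduling policies $\pi=\{\pi_0,\ldots,\pi_{K-1}\}$ (with $\pi_k$ chosen based on $\Sigma_k$ and $\mathbf{H}_k$), minimize $$\mathbb{E}\Big[\sum_{k=0}^{K-1}\Big(\Tr(\Sigma_k)+\sum_{m=1}^M\gamma\Tr(\delta_{m,k}\mathbf{C}_m\mathbf{C}_m^T)\Big)+\Tr(\Sigma_K)\Big],$$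 where $\gamma>0$ trades off estimation accuracy against transmit power. $\mathbf{1}_{\{\cdot\}}$ is the indicator function. *)

From HB Require Import structures.
From mathcomp Require Import all_boot all_order all_algebra.
From mathcomp Require Import all_classical all_reals all_analysis.
From mathcomp Require Import normal_distribution.

Set Implicit Arguments.
Unset Strict Implicit.
Unset Printing Implicit Defensive.

Import Order.TTheory GRing.Theory Num.Theory.
Local Open Scope ring_scope.

Definition posdef {R : realType} (n : nat) (X : 'M[R]_n) : Prop :=
  X^T = X /\ forall x : 'cV[R]_n, x != 0 -> 0 < (x^T *m X *m x) ord0 ord0.

Definition chan (R : realType) (M Nr Nt : nat) := 'I_M -> 'M[R]_(Nr, Nt).

Definition sched (M : nat) := {ffun 'I_M -> bool}.

(* Iterated expectation over n i.i.d. N(0,1) coordinates x_0,...,x_{n-1}: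
   gauss_iter n g = E[ g(x_0,...,x_{n-1},0,0,...) ]. *)
Fixpoint gauss_iter {R : realType} (n : nat) (g : (nat -> R) -> \bar R) : \bar R :=
  match n with
  | 0 => g (fun _ => 0)
  | n'.+1 => (\int[normal_prob (0:R) 1]_x
                 gauss_iter n' (fun v => g (fun i => if i == n' then x else v i)))%E
  end.

(* Channel built from coordinates: entry (i,j) of H_m is coordinate
   (m * Nr + i) * Nt + j; these are M*Nr*Nt distinct coordinates. *)
Definition chan_of {R : realType} (M Nr Nt : nat) (v : nat -> R) : chan R M Nr Nt :=
  fun m => \matrix_(i < Nr, j < Nt) v ((m * Nr + i) * Nt + j)%N.

Definition EH {R : realType} (M Nr Nt : nat) (F : chan R M Nr Nt -> \bar R) : \bar R :=
  gauss_iter (M * Nr * Nt) (fun v => F (@chan_of R M Nr Nt v)).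

Definition emin {R : realType} (M : nat) (F : sched M -> \bar R) : \bar R :=
  \big[Order.min/+oo%E]_(p : sched M) F p.

Section Model.
Variables (R : realType) (S Nt Nr M : nat).
Variables (A W : 'M[R]_S) (C : 'I_M -> 'M[R]_(Nt, S)) (gamma : R) (K : nat).

Definition Gsum (p : sched M) (H : chan R M Nr Nt) : 'M[R]_(Nr, S) :=
  \sum_(m < M) (p m)%:R *: (H m *m C m).

Definition fKF (Sigma : 'M[R]_S) (p : sched M) (H : chan R M Nr Nt) : 'M[R]_S :=
  A *m invmx (invmx Sigma + (Gsum p H)^T *m Gsum p H) *m A^T.

Definition sched_cost (p : sched M) : R :=
  \sum_(m < M) gamma * \tr ((p m)%:R *: (C m *m (C m)^T)).

(* Q-functions, indexed by the number n = K - k of remaining steps. *)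
Fixpoint Qaux (n : nat) (Sigma : 'M[R]_S) (H : chan R M Nr Nt) (p : sched M) : \bar R :=
  match n with
  | 0 => (\tr Sigma)%:E
  | n'.+1 => ((\tr Sigma + sched_cost p)%:E
             + EH (fun H' => emin (fun p' => Qaux n' (fKF Sigma p H + W) H' p')))%E
  end.

Definition QK (k : nat) := Qaux (K - k)%N.

(* DeltaK-functions, indexed by n = K - 1 - k. *)
Fixpoint Daux (n : nat) (Sigma : 'M[R]_S) (H : chan R M Nr Nt) (p : sched M) : \bar R :=
  match n with
  | 0 => 0%E
  | n'.+1 => EH (fun H' => emin (fun p' =>
               ((sched_cost p')%:E + (\tr (fKF (fKF Sigma p H + W) p' H'))%:E
                + Daux n' (fKF Sigma p H + W) H' p')%E))
  end.

Definition DeltaK (k : nat) := Daux (K.-1 - k)%N.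

Definition sched_policy := nat -> 'M[R]_S -> chan R M Nr Nt -> sched M.

(* Expected sched_cost-to-go of a sched_policy from time K - n with prior covariance Sigma;
   the expectation over the i.i.d. channels H_{K-n},...,H_{K-1} is written as
   iterated expectation (tower property). *)
Fixpoint Jaux (pol : sched_policy) (n : nat) (Sigma : 'M[R]_S) : \bar R :=
  match n with
  | 0 => (\tr Sigma)%:E
  | n'.+1 => EH (fun H => let p := pol (K - n)%N Sigma H in
               ((\tr Sigma + sched_cost p)%:E + Jaux pol n' (fKF Sigma p H + W))%E)
  end.

Definition JK (pol : sched_policy) (Sigma0 : 'M[R]_S) := Jaux pol K Sigma0.

End Model.

Definition sched_set (M : nat) (p : sched M) (m : 'I_M) (b : bool) : sched M :=
  [ffun i => if i == m then b else p i].

(* Unrolling the recursion one step, Tr Sigma_{k+1} = Tr f(M_k) + Tr W does not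
   depend on the fresh channel H_{k+1} nor on pi_{k+1}, so it leaves both the
   minimum and the expectation; what remains of E[min Q_{k+1}] is Delta_k, and
   the closed form follows by induction on the number of remaining steps.
   Delta_k is finite because under the empty schedule f does not depend on the
   channel. Backward induction shows that the expected cost of every policy
   dominates E[min Q_0], with equality for a policy minimising every Q_k; the
   threshold rule compares Q_k at the two schedules that differ only in sensor m.

   Measurability in the channel is never established, so expectations are only
   used through properties of the nonnegative integral (a supremum over simple
   functions) that need none: monotonicity and pulling out constants. *)

From HB Require Import structures.
From mathcomp Require Import all_boot all_order all_algebra.
From mathcomp Require Import all_classical all_reals all_analysis.
From mathcomp Require Import normal_distribution measurable_realfun.
From mathcomp Require Import ring lra zify.

Import Order.TTheory GRing.Theory Num.Theory.
Local Open Scope ring_scope.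

Set Implicit Arguments. Unset Strict Implicit. Unset Printing Implicit Defensive.

Section nonneg_integral.
Local Open Scope ereal_scope.
Import HBNNSimple.

Lemma ge0_le_integralT d (T : measurableType d) (R : realType)
    (mu : {measure set T -> \bar R}) (f g : T -> \bar R) :
  (forall x, 0 <= f x) -> (forall x, f x <= g x) ->
  \int[mu]_x f x <= \int[mu]_x g x.
Proof.
move=> f0 fg; have g0 x : 0 <= g x by exact: le_trans (f0 x) (fg x).
rewrite !ge0_integralTE//; apply: ereal_sup_le => _ [h hf <-].
by exists h => //= x; exact: le_trans (hf x) (fg x).
Qed.

Context d (T : measurableType d) (R : realType) (P : probability T R).

Lemma integral_cst_prob (c : R) : \int[P]_x c%:E = c%:E.
Proof.
rewrite (integral_cst P measurableT c%:E) -[RHS]mule1.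
by congr (_ * _); exact: probability_setT.
Qed.

Lemma ge0_integral_cstD (f : T -> \bar R) (c : R) : (0 <= c)%R ->
  (forall x, 0 <= f x) -> \int[P]_x (c%:E + f x) = c%:E + \int[P]_x f x.
Proof.
move=> c0 f0; have cf0 x : 0 <= c%:E + f x by rewrite adde_ge0.
have sintegralE (s : {nnsfun T >-> R}) : sintegral P s = \int[P]_x (s x)%:E.
  by rewrite integral_nnsfun// patch_setT.
apply/le_anti/andP; split.
- rewrite [leLHS]ge0_integralTE//; apply: ge_ereal_sup => _ [s sf <-] /=.
  pose u x := Num.max (s x - c)%R 0%R.
  have mu : measurable_fun setT u.
    by apply: measurable_maxr => //; apply: measurable_funB.
  have u0 x : 0 <= (u x)%:E by rewrite lee_fin le_max lexx orbT.
  have uf x : (u x)%:E <= f x.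
    rewrite /u; have [_|_] := leP (s x - c)%R 0%R; first exact: f0.
    by rewrite EFinB leeBlDl.
  rewrite sintegralE (@le_trans _ _ (\int[P]_x ((u x)%:E + c%:E)))//.
    apply: ge0_le_integralT => x; first by rewrite lee_fin.
    by rewrite -EFinD lee_fin -lerBlDr le_max lexx.
  rewrite ge0_integralD//; last by apply/measurable_EFinP.
  by rewrite integral_cst_prob addeC leeD2l// ge0_le_integralT.
- rewrite [X in _ + X]ge0_integralTE// -leeBrDl//.
  apply: ge_ereal_sup => _ [h hf <-] /=; rewrite EFinN leeBrDr// sintegralE.
  rewrite -[X in _ + X](integral_cst_prob c) -ge0_integralD//; last 2 first.
  + by move=> x _; rewrite lee_fin.
  + by apply/measurable_EFinP; exact: measurable_funTS.
  apply: ge0_le_integralT => x; first by rewrite adde_ge0// lee_fin.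
  by rewrite addeC leeD2l.
Qed.

End nonneg_integral.

Section gaussian_expectation.
Local Open Scope ereal_scope.
Variable R : realType.
Implicit Types (g : (nat -> R) -> \bar R) (c : R).

Lemma gauss_iter_cst n c : gauss_iter n (fun _ => c%:E) = c%:E.
Proof. by elim: n => //= n ->; exact: integral_cst_prob. Qed.

Lemma gauss_iter_ge0 n g : (forall v, 0 <= g v) -> 0 <= gauss_iter n g.
Proof. by elim: n g => //= n IH g g0; apply: integral_ge0 => x _; exact: IH. Qed.

Lemma le_gauss_iter n g1 g2 : (forall v, 0 <= g1 v) -> (forall v, g1 v <= g2 v) ->
  gauss_iter n g1 <= gauss_iter n g2.
Proof.
elim: n g1 g2 => //= n IH g1 g2 g10 g12.
by apply: ge0_le_integralT => x; [exact: gauss_iter_ge0 | exact: IH].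
Qed.

Lemma gauss_iter_cstD n g c : (0 <= c)%R -> (forall v, 0 <= g v) ->
  gauss_iter n (fun v => c%:E + g v) = c%:E + gauss_iter n g.
Proof.
move=> c0; elim: n g => //= n IH g g0.
under eq_integral do rewrite IH//.
by rewrite ge0_integral_cstD// => x; exact: gauss_iter_ge0.
Qed.

Context (M Nr Nt : nat).
Implicit Type F : chan R M Nr Nt -> \bar R.

Lemma EH_cst c : EH (fun _ : chan R M Nr Nt => c%:E) = c%:E.
Proof. exact: gauss_iter_cst. Qed.

Lemma EH_ge0 F : (forall H, 0 <= F H) -> 0 <= EH F.
Proof. by move=> F0; apply: gauss_iter_ge0. Qed.

Lemma le_EH F G : (forall H, 0 <= F H) -> (forall H, F H <= G H) -> EH F <= EH G.
Proof. by move=> F0 FG; apply: le_gauss_iter. Qed.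

Lemma EH_cstD F c : (0 <= c)%R -> (forall H, 0 <= F H) ->
  EH (fun H => c%:E + F H) = c%:E + EH F.
Proof. by move=> c0 F0; rewrite /EH gauss_iter_cstD. Qed.

End gaussian_expectation.

Definition psd {R : numDomainType} n (X : 'M[R]_n) : Prop :=
  X^T = X /\ forall x : 'cV[R]_n, 0 <= (x^T *m X *m x) ord0 ord0.

Section psd.
Variable R : realDomainType.

Lemma psd_gram r n (G : 'M[R]_(r, n)) : psd (G^T *m G).
Proof.
split=> [|x]; first by rewrite trmx_mul trmxK.
rewrite mulmxA -trmx_mul -mulmxA mxE; apply: sumr_ge0 => i _.
by rewrite mxE -expr2 sqr_ge0.
Qed.

Lemma psd_tr n (X : 'M[R]_n) : psd X -> 0 <= \tr X.
Proof.
move=> [_ hX]; apply: sumr_ge0 => i _.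
by have := hX (delta_mx i 0); rewrite trmx_delta -rowE -colE !mxE.
Qed.

Lemma psd_conj m n (B : 'M[R]_(m, n)) (Y : 'M[R]_n) : psd Y -> psd (B *m Y *m B^T).
Proof.
move=> [sY hY]; split=> [|x]; first by rewrite !trmx_mul trmxK sY mulmxA.
have -> : x^T *m (B *m Y *m B^T) *m x = (B^T *m x)^T *m Y *m (B^T *m x).
  by rewrite trmx_mul trmxK !mulmxA.
exact: hY.
Qed.

End psd.

Section posdef.
Variable R : realType.

Lemma posdef_psd n (X : 'M[R]_n) : posdef X -> psd X.
Proof.
move=> [sX hX]; split=> // x.
have [->|x0] := eqVneq x 0; first by rewrite mulmx0 mxE.
exact/ltW/hX.
Qed.

Lemma posdef_tr_ge0 n (X : 'M[R]_n) : posdef X -> 0 <= \tr X.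
Proof. by move/posdef_psd/psd_tr. Qed.

Lemma posdef_unitmx n (X : 'M[R]_n) : posdef X -> X \in unitmx.
Proof.
move=> [_ hX]; rewrite unitmxE unitfE; apply/negP => /det0P [v v0 vX].
by have := hX v^T; rewrite trmx_eq0 trmxK vX mul0mx mxE ltxx => /(_ v0).
Qed.

Lemma posdef_invmx n (X : 'M[R]_n) : posdef X -> posdef (invmx X).
Proof.
move=> hX; have uX := posdef_unitmx hX; case: hX => sX hX.
split=> [|x x0]; first by rewrite trmx_inv sX.
set y := invmx X *m x.
have xE : x = X *m y by rewrite /y mulmxA mulmxV// mul1mx.
have y0 : y != 0 by apply: contraNneq x0 => y0; rewrite xE y0 mulmx0.
rewrite xE trmx_mul sX -!mulmxA (mulmxA (invmx X)) mulVmx// mul1mx mulmxA.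
exact: hX.
Qed.

Lemma posdef_psdD n (X Y : 'M[R]_n) : posdef X -> psd Y -> posdef (X + Y).
Proof.
move=> [sX hX] [sY hY]; split=> [|x x0]; first by rewrite raddfD /= sX sY.
by rewrite mulmxDr mulmxDl mxE ltr_wpDr ?hX.
Qed.

End posdef.

Section emin.
Local Open Scope ereal_scope.
Variables (R : realType) (M : nat).
Implicit Type F : sched M -> \bar R.

Lemma emin_le F p : emin F <= F p.
Proof. by rewrite /emin (bigD1 p)//= ge_min lexx. Qed.

Lemma le_emin F a : (forall p, a <= F p) -> a <= emin F.
Proof.
move=> aF; rewrite /emin; elim/big_ind: _ => [|x y ax ay|p _]; last exact: aF.
  exact: leey.
by rewrite le_min ax ay.
Qed.

Lemma emin_attained F p : (forall q, F p <= F q) -> emin F = F p.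
Proof. by move=> Fp; apply/le_anti; rewrite emin_le le_emin. Qed.

Lemma emin_cst (c : \bar R) : emin (fun _ : sched M => c) = c.
Proof. exact: (@emin_attained _ [ffun=> false]). Qed.

Lemma emin_cstD (c : R) F : emin (fun p => c%:E + F p) = c%:E + emin F.
Proof.
apply/le_anti/andP; split; last by apply: le_emin => p; rewrite leeD2l// emin_le.
by rewrite -leeBlDl//; apply: le_emin => p; rewrite leeBlDl// emin_le.
Qed.

End emin.

Lemma sched_set_id M (p : sched M) m : sched_set p m (p m) = p.
Proof. by apply/ffunP => i; rewrite ffunE; case: eqP => // ->. Qed.

Lemma sched_cost_set (R : realType) S Nt M (C : 'I_M -> 'M[R]_(Nt, S)) gamma
    (p : sched M) m :
  sched_cost C gamma (sched_set p m true)
  = sched_cost C gamma (sched_set p m false) + \tr (gamma *: (C m *m (C m)^T)).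
Proof.
rewrite /sched_cost (bigD1 m)// [in RHS](bigD1 m)//= !ffunE eqxx !mxtraceZ.
rewrite (eq_bigr (fun i => gamma * \tr ((sched_set p m false i)%:R *: (C i *m (C i)^T)))).
  by rewrite mul1r mul0r mulr0 add0r addrC.
by move=> i /negbTE im; rewrite !ffunE im.
Qed.

Section model.
Variables (R : realType) (S Nt Nr M : nat).
Variables (A W : 'M[R]_S) (C : 'I_M -> 'M[R]_(Nt, S)) (gamma : R).
Hypotheses (gamma_gt0 : 0 < gamma) (posdef_W : posdef W).
Local Notation chan := (chan R M Nr Nt).
Local Notation fKF := (fKF A C).
Local Notation Qaux := (Qaux A W C gamma).
Local Notation Daux := (Daux A W C gamma).

Definition sched0 : sched M := [ffun=> false].

Lemma fKF_sched0 Sigma (H H' : chan) : fKF Sigma sched0 H = fKF Sigma sched0 H'.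
Proof.
suff Gsum0 (G : chan) : Gsum C sched0 G = 0 by rewrite /fKF !Gsum0.
by rewrite /Gsum big1 // => i _; rewrite ffunE scale0r.
Qed.

Lemma psd_fKF Sigma p (H : chan) : posdef Sigma -> psd (fKF Sigma p H).
Proof.
move=> pS; apply/psd_conj/posdef_psd/posdef_invmx/posdef_psdD; last exact: psd_gram.
exact: posdef_invmx.
Qed.

Lemma posdef_next_cov Sigma p (H : chan) : posdef Sigma -> posdef (fKF Sigma p H + W).
Proof. by move=> pS; rewrite addrC; apply: posdef_psdD => //; exact: psd_fKF. Qed.

Lemma sched_cost_ge0 p : 0 <= sched_cost C gamma p.
Proof.
apply: sumr_ge0 => i _; rewrite mxtraceZ; apply/mulr_ge0/mulr_ge0 => //.
  exact: ltW.
by rewrite -{1}(trmxK (C i)); apply/psd_tr/psd_gram.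
Qed.

Local Open Scope ereal_scope.

Definition Dstep n (Sigma' : 'M[R]_S) (H' : chan) (p' : sched M) : \bar R :=
  (sched_cost C gamma p')%:E + (\tr (fKF Sigma' p' H'))%:E + Daux n Sigma' H' p'.

Lemma DauxS n Sigma (H : chan) p :
  Daux n.+1 Sigma H p = EH (fun H' => emin (Dstep n (fKF Sigma p H + W)%R H')).
Proof. reflexivity. Qed.

Lemma Daux_sched0 n Sigma (H H' : chan) : Daux n Sigma H sched0 = Daux n Sigma H' sched0.
Proof. by case: n => [//|n]; rewrite !DauxS (fKF_sched0 _ H H'). Qed.

Lemma Dstep_ge0 n Sigma' (H' : chan) p' : posdef Sigma' ->
  0 <= Daux n Sigma' H' p' -> 0 <= Dstep n Sigma' H' p'.
Proof.
move=> pS' D0; rewrite /Dstep adde_ge0// -EFinD lee_fin addr_ge0 ?sched_cost_ge0//.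
exact/psd_tr/psd_fKF.
Qed.

Lemma Daux_ge0 n Sigma (H : chan) p : posdef Sigma -> 0 <= Daux n Sigma H p.
Proof.
elim: n Sigma H p => [//|n IH] Sigma H p pS.
have pS' := posdef_next_cov p H pS.
by rewrite DauxS; apply: EH_ge0 => H'; apply: le_emin => p'; rewrite Dstep_ge0 ?IH.
Qed.

Lemma Daux_fin_num n Sigma (H : chan) p : posdef Sigma -> Daux n Sigma H p \is a fin_num.
Proof.
elim: n Sigma H p => [//|n IH] Sigma H p pS.
rewrite ge0_fin_numE ?Daux_ge0// DauxS.
have pS' := posdef_next_cov p H pS; set Sigma' := (fKF Sigma p H + W)%R.
have fin_step0 : Dstep n Sigma' H sched0 \is a fin_num.
  by rewrite /Dstep !fin_numD IH.
apply: (@le_lt_trans _ _ (Dstep n Sigma' H sched0)); last first.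
  by rewrite -(fineK fin_step0) ltry.
have -> : Dstep n Sigma' H sched0 = EH (fun _ : chan => Dstep n Sigma' H sched0).
  by rewrite -(fineK fin_step0) EH_cst.
apply: le_EH => H'; first by apply: le_emin => p'; rewrite Dstep_ge0 ?Daux_ge0.
apply: le_trans (emin_le _ sched0) _.
by rewrite /Dstep (fKF_sched0 _ H' H) (Daux_sched0 _ _ H' H).
Qed.

Lemma QauxS n Sigma (H : chan) p : Qaux n.+1 Sigma H p
  = (\tr Sigma + sched_cost C gamma p)%:E
    + EH (fun H' : chan => emin (fun p' => Qaux n (fKF Sigma p H + W)%R H' p')).
Proof. reflexivity. Qed.

Lemma Qaux_ge0 n Sigma (H : chan) p : posdef Sigma -> 0 <= Qaux n Sigma H p.
Proof.
elim: n Sigma H p => [|n IH] Sigma H p pS.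
  by change (0 <= (\tr Sigma)%:E); rewrite lee_fin posdef_tr_ge0.
rewrite QauxS; apply: adde_ge0.
  by rewrite lee_fin addr_ge0 ?sched_cost_ge0 ?posdef_tr_ge0.
by apply: EH_ge0 => H'; apply: le_emin => p'; apply/IH/posdef_next_cov.
Qed.

Lemma Qaux_closed n Sigma (H : chan) p : posdef Sigma ->
  Qaux n.+1 Sigma H p = (\tr Sigma + sched_cost C gamma p + \tr (fKF Sigma p H)
    + n.+1%:R * \tr W)%:E + Daux n Sigma H p.
Proof.
elim: n Sigma H p => [|n IH] Sigma H p pS; rewrite QauxS.
  rewrite (_ : EH _ = EH (fun _ : chan => (\tr (fKF Sigma p H + W))%:E)); last first.
    by congr EH; apply/funext => H'; exact: emin_cst.
  by rewrite EH_cst adde0 -EFinD mxtraceD; congr EFin; ring.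
have pS' := posdef_next_cov p H pS; set Sigma' := (fKF Sigma p H + W)%R.
set c := (\tr Sigma' + n.+1%:R * \tr W)%R.
have c0 : (0 <= c)%R by rewrite addr_ge0 ?mulr_ge0 ?posdef_tr_ge0.
rewrite (_ : EH _ = EH (fun H' => c%:E + emin (Dstep n Sigma' H'))); last first.
  congr EH; apply/funext => H'; rewrite -emin_cstD; congr emin; apply/funext => p'.
  by rewrite IH// /Dstep !addeA -!EFinD; congr (_%:E + _); rewrite /c; ring.
rewrite EH_cstD//; last by move=> H'; apply: le_emin => p'; rewrite Dstep_ge0 ?Daux_ge0.
by rewrite DauxS addeA -EFinD /c mxtraceD; congr (_%:E + _); ring.
Qed.

Variable K : nat.
Local Notation Jaux := (Jaux A W C gamma K).
Local Notation QK := (QK A W C gamma K).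
Local Notation DeltaK := (DeltaK A W C gamma K).

Definition opt_cost n Sigma : \bar R := EH (fun H : chan => emin (Qaux n Sigma H)).

Lemma opt_cost0 Sigma : opt_cost 0 Sigma = (\tr Sigma)%:E.
Proof.
rewrite -[RHS](@EH_cst _ M Nr Nt); congr EH.
by apply/funext => H; exact: emin_cst.
Qed.

Lemma JauxS pol n Sigma : Jaux pol n.+1 Sigma = EH (fun H : chan =>
  (\tr Sigma + sched_cost C gamma (pol (K - n.+1)%N Sigma H))%:E
  + Jaux pol n (fKF Sigma (pol (K - n.+1)%N Sigma H) H + W)%R).
Proof. reflexivity. Qed.

Lemma Jaux_greedy (pistar : sched_policy R S Nt Nr M) :
  (forall k Sigma (H : chan) p, (k < K)%N -> posdef Sigma ->
     QK k Sigma H (pistar k Sigma H) <= QK k Sigma H p) ->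
  forall n Sigma, (n <= K)%N -> posdef Sigma -> Jaux pistar n Sigma = opt_cost n Sigma.
Proof.
move=> greedy; elim=> [|n IH] Sigma nK pS; first by rewrite opt_cost0.
rewrite JauxS; congr EH; apply/funext => H.
rewrite IH; [|exact: ltnW|exact: posdef_next_cov].
rewrite (@emin_attained _ _ _ (pistar (K - n.+1)%N Sigma H))// => q.
by have := greedy (K - n.+1)%N Sigma H q; rewrite /QK subKn//; apply=> //; lia.
Qed.

Lemma opt_cost_le_Jaux (pol : sched_policy R S Nt Nr M) n Sigma : posdef Sigma ->
  opt_cost n Sigma <= Jaux pol n Sigma.
Proof.
elim: n Sigma => [|n IH] Sigma pS; first by rewrite opt_cost0.
rewrite JauxS; apply: le_EH => [H|H]; first by apply: le_emin => q; exact: Qaux_ge0.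
apply: le_trans (emin_le _ (pol (K - n.+1)%N Sigma H)) _.
by rewrite QauxS leeD2l// IH//; exact: posdef_next_cov.
Qed.

Lemma QK_closed k Sigma (H : chan) p : (k < K)%N -> posdef Sigma ->
  QK k Sigma H p = (\tr Sigma + sched_cost C gamma p + \tr (fKF Sigma p H)
    + (K - k)%:R * \tr W)%:E + DeltaK k Sigma H p.
Proof.
by move=> kK pS; rewrite /QK /DeltaK (_ : (K - k = (K.-1 - k).+1)%N) ?Qaux_closed//; lia.
Qed.

Lemma optimal_sched_threshold k Sigma (H : chan) pstar :
  (k < K)%N -> posdef Sigma -> (forall p, QK k Sigma H pstar <= QK k Sigma H p) ->
  forall m, let p0 := sched_set pstar m false in
  let p1 := sched_set pstar m true in
  let lhs := (\tr (fKF Sigma p0 H))%:E + DeltaK k Sigma H p0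
             - (\tr (fKF Sigma p1 H))%:E - DeltaK k Sigma H p1 in
  (pstar m = true -> (\tr (gamma *: (C m *m (C m)^T)))%:E <= lhs)
  /\ (pstar m = false -> lhs <= (\tr (gamma *: (C m *m (C m)^T)))%:E).
Proof.
move=> kK pS opt m p0 p1 lhs.
have DeltaE q : exists d, DeltaK k Sigma H q = d%:E.
  by exists (fine (DeltaK k Sigma H q)); rewrite fineK// Daux_fin_num.
have [[d0 e0] [d1 e1]] := (DeltaE p0, DeltaE p1).
have cost1 := sched_cost_set C gamma pstar m.
rewrite /lhs e0 e1 -!EFinN -!EFinD !lee_fin.
split=> pm; [have := opt p0 | have := opt p1];
  rewrite -{1}(sched_set_id pstar m) pm !QK_closed// -/p0 -/p1 e0 e1;
  rewrite -!EFinD lee_fin cost1; lra.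
Qed.

End model.

Theorem theorem1 (R : realType) (S Nt Nr M K : nat)
  (A W : 'M[R]_S) (C : 'I_M -> 'M[R]_(Nt, S)) (gamma : R) (Sigma0 : 'M[R]_S) :
  0 < gamma -> posdef W -> posdef Sigma0 ->
  (* (i) the DP recursion (minimizing Q_k at every k) solves Problem 1 *)
  (forall pistar : sched_policy R S Nt Nr M,
     (forall (k : nat) (Sigma : 'M[R]_S) (H : chan R M Nr Nt) (p : sched M),
        (k < K)%N -> posdef Sigma ->
        (QK A W C gamma K k Sigma H (pistar k Sigma H)
           <= QK A W C gamma K k Sigma H p)%E) ->
     JK A W C gamma K pistar Sigma0
       = EH (fun H : chan R M Nr Nt => emin (fun p => QK A W C gamma K 0 Sigma0 H p))
     /\ forall pol : sched_policy R S Nt Nr M,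
          (JK A W C gamma K pistar Sigma0 <= JK A W C gamma K pol Sigma0)%E)
  /\
  (* (ii) closed form of the Q-functions *)
  (forall (k : nat) (Sigma : 'M[R]_S) (H : chan R M Nr Nt) (p : sched M),
     (k < K)%N -> posdef Sigma ->
     QK A W C gamma K k Sigma H p
     = ((\tr Sigma + sched_cost C gamma p + \tr (fKF A C Sigma p H) + (K - k)%:R * \tr W)%:E
        + (if (k.+2 <= K)%N then DeltaK A W C gamma K k Sigma H p else 0))%E)
  /\
  (* (iii) characterization of the optimal schedule *)
  (forall (k : nat) (Sigma : 'M[R]_S) (H : chan R M Nr Nt) (pstar : sched M),
     (k < K)%N -> posdef Sigma ->
     (forall p, (QK A W C gamma K k Sigma H pstar <= QK A W C gamma K k Sigma H p)%E) ->
     forall m : 'I_M,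
     let p0 := sched_set pstar m false in
     let p1 := sched_set pstar m true in
     let lhs := ((\tr (fKF A C Sigma p0 H))%:E + DeltaK A W C gamma K k Sigma H p0
                 - (\tr (fKF A C Sigma p1 H))%:E - DeltaK A W C gamma K k Sigma H p1)%E in
     (pstar m = true -> (lhs >= (\tr (gamma *: (C m *m (C m)^T)))%:E)%E)
     /\ (pstar m = false -> (lhs <= (\tr (gamma *: (C m *m (C m)^T)))%:E)%E)).
Proof.
move=> gamma_gt0 posdef_W posdef_Sigma0; split; [|split].
- move=> pistar greedy; rewrite /JK (Jaux_greedy gamma_gt0 posdef_W greedy) ?leqnn//.
  split; first by rewrite /opt_cost /QK subn0.
  by move=> pol; exact: opt_cost_le_Jaux.
- move=> k Sigma H p kK pS; rewrite QK_closed//.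
  case: ifP => [//|short]; rewrite /DeltaK (_ : (K.-1 - k = 0)%N) ?adde0//; lia.
- exact: (optimal_sched_threshold gamma_gt0 posdef_W).
Qed.
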